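(* Let $G_1$ and $G_2$ be two disjoint $(k+1)$-critical hypergraphs with $k\ge2$, let $\tilde e\in E(G_1)$, let $\tilde v$ be a low vertex of $G_2$, and let $s$ be any admissible map for $(\tilde e,G_2,\tilde v)$. Then $G=S(G_1,\tilde e,G_2,\tilde v,s)$ is $(k+1)$-critical, and $\partial_G(V(G_1))$ is a separating edge set of $G$ of size $k$.
   Context: A hypergraph is a pair $G=(V,E)$ of finite sets with $E\subseteq 2^V$ and $|e|\ge2$ for all $e\in E$. A coloring requires every edge to contain two vertices of different colors; $\chi$ is the chromatic number. $G$ is $(k+1)$-critical if $\chi(G)=k+1$ but $\chi(H)\le k$ for every proper subhypergraph $H$. In a $(k+1)$-critical hypergraph, a low vertex is one of degree exactly $k$ (degree = number of edges containing it). $\partial_G(X)$ is the set of edges meeting both $X$ and $V(G)\setminus X$; $\partial_G(v)=\partial_G(\{v\})$. A separating edge set is $F\subseteq E(G)$ such that $G-F$ has more components than $G$. Splitting: let $G_1,G_2$ be disjoint hypergraphs, $\tilde e\in E(G_1)$, $\tilde v\in V(G_2)$, and $s:\partial_{G_2}(\tilde v)\to 2^{\tilde e}$ a map (called admissible) with $s(e)\ne\varnothing$ for all $e$ and $\bigcup_{e}s(e)=\tilde e$. Then $S(G_1,\tilde e,G_2,\tilde v,s)$ is the hypergraph with vertex set $V(G_1)\cup(V(G_2)\setminus\{\tilde v\})$ and edge set $(E(G_1)\setminus\{\tilde e\})\cup(E(G_2)\setminus\partial_{G_2}(\tilde v))\cup\{(e\setminus\{\tilde v\})\cup s(e): e\in\partial_{G_2}(\tilde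 v)\}$. *)

From mathcomp Require Import all_boot.
Set Implicit Arguments. Unset Strict Implicit. Unset Printing Implicit Defensive.

Record hypergraph (T : finType) := Hypergraph { hV : {set T}; hE : {set {set T}} }.

Definition is_hypergraph (T : finType) (G : hypergraph T) : Prop :=
  forall e, e \in hE G -> e \subset hV G /\ 2 <= #|e|.

Definition colorable (T : finType) (G : hypergraph T) (m : nat) : Prop :=
  exists f : T -> nat, (forall x, x \in hV G -> f x < m) /\
    forall e, e \in hE G -> exists x y, [/\ x \in e, y \in e & f x != f y].

Definition chromatic_number (T : finType) (G : hypergraph T) (m : nat) : Prop :=
  colorable G m /\ forall j, colorable G j -> m <= j.

Definition subhypergraph (T : finType) (H G : hypergraph T) : Prop :=
  is_hypergraph H /\ hV H \subset hV G /\ hE H \subset hE G.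

Definition proper_subhypergraph (T : finType) (H G : hypergraph T) : Prop :=
  subhypergraph H G /\ H <> G.

Definition critical (T : finType) (G : hypergraph T) (k : nat) : Prop :=
  chromatic_number G k.+1 /\
  forall H, proper_subhypergraph H G -> exists j, chromatic_number H j /\ j <= k.

Definition degree (T : finType) (G : hypergraph T) (v : T) : nat :=
  #|[set e in hE G | v \in e]|.

Definition low_vertex (T : finType) (G : hypergraph T) (k : nat) (v : T) : Prop :=
  v \in hV G /\ degree G v = k.

Definition boundary (T : finType) (G : hypergraph T) (X : {set T}) : {set {set T}} :=
  [set e in hE G | (e :&: X != set0) && (e :&: (hV G :\: X) != set0)].

Definition hadj (T : finType) (G : hypergraph T) : rel T :=
  fun x y => [&& x \in hV G, y \in hV G & [exists e in hE G, (x \in e) && (y \in e)]].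

Definition components (T : finType) (G : hypergraph T) : {set {set T}} :=
  [set [set y in hV G | connect (hadj G) x y] | x in hV G].

Definition delete_edges (T : finType) (G : hypergraph T) (F : {set {set T}}) :=
  Hypergraph (hV G) (hE G :\: F).

Definition separating (T : finType) (G : hypergraph T) (F : {set {set T}}) : Prop :=
  F \subset hE G /\ #|components G| < #|components (delete_edges G F)|.

Definition admissible (T : finType) (et : {set T}) (G2 : hypergraph T) (v : T)
    (s : {set T} -> {set T}) : Prop :=
  (forall e, e \in boundary G2 [set v] -> s e \subset et /\ s e != set0) /\
  \bigcup_(e in boundary G2 [set v]) s e = et.

Definition split_hg (T : finType) (G1 : hypergraph T) (et : {set T})
    (G2 : hypergraph T) (v : T) (s : {set T} -> {set T}) : hypergraph T :=
  Hypergraph (hV G1 :|: (hV G2 :\ v))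
    ((hE G1 :\ et) :|: (hE G2 :\: boundary G2 [set v])
       :|: [set (e :\ v) :|: s e | e in boundary G2 [set v]]).

From mathcomp Require Import all_boot.
From Stdlib Require Import Classical Lia.
Set Implicit Arguments. Unset Strict Implicit. Unset Printing Implicit Defensive.

(* Every edge of S = S(G1, et, G2, v, s) comes from an edge of G1 other than et, from an
   edge of G2 avoiding v, or from an edge e at v by replacing v with s e; the last kind form
   the boundary of V(G1), and there are deg v = k of them.
   A k-colouring of S either makes et bichromatic, and then colours G1, or constant on et,
   and then colours G2 once v receives that constant colour; so chi(S) > k.
   Deleting an edge f of S leaves a k-colourable hypergraph.  If f comes from G2, colour
   G2 - f and G1 - et (where et is monochromatic) and permute the colours of G1 so that et
   gets the colour of v.  If f comes from G1, colour G1 - f (where et is bichromatic) and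
   G2 - v: there every edge e at the low vertex v is monochromatic on e - v, each colour
   occurring for exactly one e, and a Hall-type matching permutes the colours of G2 so that
   no s e is monochromatic in the colour of e - v.  As S has no isolated vertex, it is
   (k+1)-critical, and its nonempty boundary is a separating edge set. *)

Section Colorings.
Variable T : finType.
Implicit Types (G H : hypergraph T) (f g : T -> nat) (e A : {set T}).

Definition monochromatic f e := [forall x in e, forall y in e, f x == f y].

Definition proper_coloring G m f : Prop :=
  (forall x, x \in hV G -> f x < m) /\ (forall e, e \in hE G -> ~~ monochromatic f e).

Lemma monochromaticPn f e :
  reflect (exists x y, [/\ x \in e, y \in e & f x != f y]) (~~ monochromatic f e).
Proof.
apply: (iffP forall_inPn) => [[x xe /forall_inPn[y ye ne]]|[x [y [xe ye ne]]]].
  by exists x, y.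
by exists x => //; apply/forall_inPn; exists y.
Qed.

Lemma monochromatic_at f e x :
  x \in e -> monochromatic f e = [forall y in e, f y == f x].
Proof.
move=> xe; apply/forall_inP/forall_inP => [mono y ye|same y ye].
  by have /forall_inP/(_ x xe) := mono y ye.
by apply/forall_inP => z ze; rewrite (eqP (same y ye)) (eqP (same z ze)).
Qed.

Lemma monochromatic_eq_in f g e :
  {in e, f =1 g} -> monochromatic f e = monochromatic g e.
Proof.
move=> fg; apply: eq_forallb_in => x xe; apply: eq_forallb_in => y ye.
by rewrite !fg.
Qed.

Lemma monochromatic_comp_in (P : pred nat) (sigma : nat -> nat) f e :
  {in P &, injective sigma} -> {in e, forall x, P (f x)} ->
  monochromatic (sigma \o f) e = monochromatic f e.
Proof.
move=> sigma_inj fP; apply: eq_forallb_in => x xe; apply: eq_forallb_in => y ye.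
by apply/eqP/eqP => [/sigma_inj eq_sigma|/= -> //]; exact: eq_sigma (fP x xe) (fP y ye).
Qed.

Lemma monochromatic_splice f g e S v :
  v \in e -> S != set0 -> {in e :\ v, f =1 g} -> {in S, forall z, f z = g v} ->
  monochromatic f ((e :\ v) :|: S) = monochromatic g e.
Proof.
move=> ve /set0Pn[w wS] fg fS.
rewrite (monochromatic_at _ (_ : w \in _)) ?inE ?wS ?orbT // (monochromatic_at _ ve).
rewrite fS //; apply/forall_inP/forall_inP => [same y ye|same y].
  case: (eqVneq y v) => [-> //|yv].
  by rewrite -fg ?inE ?yv ?ye // same // !inE yv ye.
rewrite !inE => /orP[/andP[yv ye]|yS]; last by rewrite fS.
by rewrite fg ?inE ?yv ?ye // same.
Qed.

Lemma setD1_neq0 A x : 1 < #|A| -> A :\ x != set0.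
Proof.
rewrite -card_gt0 => A_gt1; move: (cardsD1 x A) A_gt1 => ->.
by case: (x \in A) => //= /ltnW.
Qed.

Lemma colorableP G m : colorable G m <-> exists f, proper_coloring G m f.
Proof.
by split=> -[f [Hv He]]; exists f; split=> // e /He /monochromaticPn.
Qed.

Lemma colorable_leq G m n : m <= n -> colorable G m -> colorable G n.
Proof. by move=> le [f [Hv He]]; exists f; split=> // x /Hv/leq_trans; apply. Qed.

Lemma colorable_sub G H m :
  hV H \subset hV G -> hE H \subset hE G -> colorable G m -> colorable H m.
Proof.
by move=> /subsetP sV /subsetP sE [f [Hv He]]; exists f; split=> [x /sV/Hv|e /sE/He].
Qed.

Lemma exists_chromatic_number G m :
  colorable G m -> exists2 j, chromatic_number G j & j <= m.
Proof.
elim/ltn_ind: m => m IH colm.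
case: (classic (exists2 j, colorable G j & j < m)) => [[j colj lt_jm]|no_smaller].
  have [i chi_i le_ij] := IH j lt_jm colj.
  by exists i => //; exact: leq_trans le_ij (ltnW lt_jm).
exists m => //; split=> // j colj; rewrite leqNgt; apply/negP => lt_jm.
by apply: no_smaller; exists j.
Qed.

Lemma hypergraph_eq G H : hV G = hV H -> hE G = hE H -> G = H.
Proof. by case: G H => VG EG [VH EH] /= -> ->. Qed.

Definition del_edge G e := Hypergraph (hV G) (hE G :\ e).

Lemma del_edge_proper G e :
  is_hypergraph G -> e \in hE G -> proper_subhypergraph (del_edge G e) G.
Proof.
move=> hypG eE; split; first split.
- by move=> f; rewrite inE => /andP[_]; exact: hypG.
- by rewrite subxx subsetDl.
move=> eq; have : e \in hE (del_edge G e) by rewrite eq.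
by rewrite !inE eqxx.
Qed.

Lemma colorable_del_edge_succ G e m :
  is_hypergraph G -> e \in hE G -> colorable (del_edge G e) m -> colorable G m.+1.
Proof.
move=> hypG eE /colorableP[g [Hv He]]; have [sub_eV e_gt1] := hypG e eE.
have /card_gt1P[x [y [xe ye xy]]] := e_gt1.
pose g' z := if z == x then m else g z.
have g'_lt z : z \in hV G -> z != x -> g' z < m by rewrite /g' => zV /negbTE->; apply: Hv.
apply/colorableP; exists g'; split=> [z zV|f fE].
  by rewrite /g'; case: eqP => // _; apply/leqW/Hv.
case: (eqVneq f e) => [->|fe].
  apply/monochromaticPn; exists x, y; split=> //.
  by rewrite {1}/g' eqxx neq_ltn g'_lt ?orbT ?(subsetP sub_eV) // eq_sym.
have [sub_fV _] := hypG f fE.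
have /monochromaticPn[a [b [af bf gab]]] : ~~ monochromatic g f by apply: He; rewrite !inE fe.
apply/monochromaticPn; exists a, b; split=> //.
case: (eqVneq a x) => [ax|ax]; case: (eqVneq b x) => [bx|bx].
- by rewrite ax bx eqxx in gab.
- by rewrite {1}/g' ax eqxx eq_sym neq_ltn g'_lt ?(subsetP sub_fV).
- by rewrite {2}/g' bx eqxx neq_ltn g'_lt ?(subsetP sub_fV).
- by rewrite /g' (negbTE ax) (negbTE bx).
Qed.

Section Critical.
Variables (G : hypergraph T) (k : nat).
Hypothesis critG : critical G k.

Lemma critical_colorable_gt j : colorable G j -> k < j.
Proof. by case: critG => -[_ min_k] _ /min_k. Qed.

Lemma critical_proper_colorable H : proper_subhypergraph H G -> colorable H k.
Proof.
by case: critG => _ crit /crit[j [[colj _] le_jk]]; exact: colorable_leq colj.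
Qed.

Lemma critical_del_edge_monochromatic e f :
  e \in hE G -> proper_coloring (del_edge G e) k f -> monochromatic f e.
Proof.
move=> eE [Hv He]; apply/negPn/negP => not_mono.
suff /critical_colorable_gt : colorable G k by rewrite ltnn.
apply/colorableP; exists f; split=> // e' e'E.
by case: (eqVneq e' e) => [->|ne]; last by apply: He; rewrite !inE ne.
Qed.

Lemma critical_vertex_covered x :
  0 < k -> is_hypergraph G -> x \in hV G -> exists2 e, e \in hE G & x \in e.
Proof.
move=> k_gt0 hypG xV; apply: NNPP => isolated.
have x_notin e : e \in hE G -> x \notin e.
  by move=> eE; apply/negP => xe; apply: isolated; exists e.
pose H := Hypergraph (hV G :\ x) (hE G).
have /critical_proper_colorable/colorableP[f [Hv He]] : proper_subhypergraph H G.
  split; first split.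
  - move=> e eE; have [sub_eV e_gt1] := hypG e eE; split=> //.
    apply/subsetP => y ye; rewrite !inE (subsetP sub_eV _ ye) andbT.
    by apply: contraNneq (x_notin e eE) => <-.
  - by rewrite subsetDl subxx.
  move=> eq; have : x \in hV H by rewrite eq.
  by rewrite !inE eqxx.
suff /critical_colorable_gt : colorable G k by rewrite ltnn.
apply/colorableP; exists (fun y => if y == x then 0 else f y); split=> [y yV|e eE].
  by case: eqP => [//|/eqP yx]; apply: Hv; rewrite !inE yx.
rewrite (monochromatic_eq_in (g := f)) ?He // => y ye /=.
by case: eqP => // yx; move: (x_notin e eE); rewrite -yx ye.
Qed.

End Critical.

Lemma critical_from_del_edge G k :
  is_hypergraph G -> hE G != set0 ->
  (forall x, x \in hV G -> exists2 e, e \in hE G & x \in e) ->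
  (forall j, colorable G j -> k < j) ->
  (forall e, e \in hE G -> colorable (del_edge G e) k) ->
  critical G k.
Proof.
move=> hypG /set0Pn[e0 e0E] covered lower col_del; split.
  split=> //; exact: colorable_del_edge_succ hypG e0E (col_del e0 e0E).
move=> H [[hypH [sVHG sEHG]] neHG].
have [e eG eH] : exists2 e, e \in hE G & e \notin hE H.
  apply: NNPP => all_in; apply: neHG.
  have EHG : hE H = hE G.
    apply/eqP; rewrite eqEsubset sEHG; apply/subsetP => e eG.
    by apply: NNPP => /negP eH; apply: all_in; exists e.
  have VHG : hV H = hV G.
    apply/eqP; rewrite eqEsubset sVHG; apply/subsetP => x /covered[e eG xe].
    by rewrite -EHG in eG; have [/subsetP sub_eV _] := hypH e eG; apply: sub_eV.
  exact: hypergraph_eq.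
have [j chi_j le_jk] : exists2 j, chromatic_number H j & j <= k.
  apply/exists_chromatic_number/(colorable_sub _ _ (col_del e eG)) => //.
  apply/subsetP => f fH; rewrite !inE (subsetP sEHG _ fH) andbT.
  by apply: contraNneq eH => <-.
by exists j.
Qed.

Definition edges_at G v := [set e in hE G | v \in e].

Lemma boundary_set1 G v : is_hypergraph G -> boundary G [set v] = edges_at G v.
Proof.
move=> hypG; apply/setP => e; rewrite !inE; apply/andP/andP => [[eE /andP[]]|[eE ve]].
  by case/set0Pn=> x; rewrite !inE => /andP[xe /eqP <-].
split=> //; have [/subsetP sub_eV e_gt1] := hypG e eE.
have /set0Pn[x] := setD1_neq0 v e_gt1; rewrite !inE => /andP[xv xe].
apply/andP; split; apply/set0Pn; first by exists v; rewrite !inE ve eqxx.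
by exists x; rewrite !inE xe xv sub_eV.
Qed.

Definition del_vertex G v := Hypergraph (hV G :\ v) (hE G :\: edges_at G v).

Lemma del_vertex_proper G v :
  is_hypergraph G -> v \in hV G -> proper_subhypergraph (del_vertex G v) G.
Proof.
move=> hypG vV; split; first split.
- move=> e; rewrite !inE => /andP[not_at eE]; rewrite eE /= in not_at.
  have [/subsetP sub_eV e_gt1] := hypG e eE; split=> //.
  apply/subsetP => x xe; rewrite !inE sub_eV // andbT.
  by apply: contraNneq not_at => <-.
- by rewrite !subsetDl.
move=> eq; have : v \in hV (del_vertex G v) by rewrite eq.
by rewrite !inE eqxx.
Qed.

Section LowVertex.
Variables (G : hypergraph T) (k : nat) (v : T) (g : T -> nat).
Hypotheses (hypG : is_hypergraph G) (critG : critical G k) (low : low_vertex G k v).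
Hypothesis col_g : proper_coloring (del_vertex G v) k g.

Lemma low_vertex_edge_of_color c :
  c < k -> [exists e in edges_at G v, [forall z in e :\ v, g z == c]].
Proof.
move=> lt_ck; apply: contraT => no_edge; case: col_g => Hv He.
suff /(critical_colorable_gt critG) : colorable G k by rewrite ltnn.
apply/colorableP; exists (fun z => if z == v then c else g z); split=> [z zV|e eE].
  by case: eqP => // /eqP zv; apply: Hv; rewrite !inE zv.
case: (boolP (v \in e)) => ve.
  have /forall_inPn[z zev /= gz] : ~~ [forall z in e :\ v, g z == c].
    by apply: contra no_edge => mono; apply/existsP; exists e; rewrite !inE eE ve.
  apply/monochromaticPn; exists z, v; move: zev; rewrite !inE eqxx => /andP[/negbTE-> ->].
  by split.
have eE' : e \in hE (del_vertex G v) by rewrite !inE eE (negbTE ve).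
rewrite (monochromatic_eq_in (g := g)) ?He // => z ze /=.
by case: eqP => // zv; rewrite -zv ze in ve.
Qed.

Definition edge_of_color c :=
  odflt set0 [pick e in edges_at G v | [forall z in e :\ v, g z == c]].

Lemma edge_of_colorP c : c < k ->
  edge_of_color c \in edges_at G v /\ {in edge_of_color c :\ v, forall z, g z = c}.
Proof.
rewrite /edge_of_color => /low_vertex_edge_of_color/existsP[e0 /andP[e0v mono0]].
case: pickP => [e /andP[ev /forall_inP mono]|none] /=; first by split=> // z /mono/eqP.
by move: (none e0); rewrite e0v mono0.
Qed.

Lemma edge_of_color_onto e :
  e \in edges_at G v -> exists2 c, c < k & e = edge_of_color c.
Proof.
have inj : injective (fun c : 'I_k => edge_of_color c).
  move=> c c' /= same; apply: ord_inj; have [eE mono] := edge_of_colorP (ltn_ord c).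
  have [_ mono'] := edge_of_colorP (ltn_ord c').
  have [_ e_gt1] : edge_of_color c \subset hV G /\ 1 < #|edge_of_color c|.
    by apply: hypG; move: eE; rewrite inE => /andP[].
  have /set0Pn[z zev] := setD1_neq0 v e_gt1.
  by rewrite -(mono z zev) (mono' z) -?same.
have sub : [set edge_of_color c | c : 'I_k] \subset edges_at G v.
  by apply/subsetP => _ /imsetP[c _ ->]; case: (edge_of_colorP (ltn_ord c)).
have card_eq : #|[set edge_of_color c | c : 'I_k]| = #|edges_at G v|.
  by rewrite card_imset // card_ord; case: low => _ <-.
move=> ev; have /imsetP[c _ ->] : e \in [set edge_of_color c | c : 'I_k].
  by rewrite (subset_cardP card_eq sub).
by exists c.
Qed.

End LowVertex.

End Colorings.

Section Components.
Variable T : finType.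
Implicit Types (G : hypergraph T) (X : {set T}) (F : {set {set T}}).

Lemma hadj_sym G : symmetric (hadj G).
Proof.
move=> x y; rewrite /hadj andbCA; congr [&& _, _ & _].
by apply/existsP/existsP => -[e /and3P[eE xe ye]]; exists e; rewrite eE xe ye.
Qed.

Definition component G x := [set y in hV G | connect (hadj G) x y].

Lemma component_eq G x y : connect (hadj G) x y -> component G x = component G y.
Proof.
move=> xy; apply/setP => z; rewrite !inE; congr andb.
exact: (same_connect (sym_connect_sym (@hadj_sym G)) xy).
Qed.

Lemma connect_delete_edges G F :
  subrel (connect (hadj (delete_edges G F))) (connect (hadj G)).
Proof.
apply: connect_sub => a b /and3P[aV bV /existsP[e /and3P[eE ae be]]].
apply/connect1/and3P; split=> //; apply/existsP; exists e.
by move: eE; rewrite !inE ae be => /andP[_ ->].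
Qed.

Lemma bigcup_component_delete_edges G F x : x \in hV G ->
  \bigcup_(z in component (delete_edges G F) x) component G z = component G x.
Proof.
move=> xV; apply/setP => w; apply/bigcupP/idP => [[z]|wx].
  by rewrite inE => /andP[_ /connect_delete_edges/component_eq <-].
by exists x; rewrite // inE xV connect0.
Qed.

Lemma components_delete_edges G F :
  components G =
  [set \bigcup_(z in C) component G z | C : {set T} in components (delete_edges G F)].
Proof.
rewrite /components -imset_comp; apply: eq_in_imset => x xV /=.
by rewrite bigcup_component_delete_edges.
Qed.

Lemma boundary_closed G X : closed (hadj (delete_edges G (boundary G X))) X.
Proof.
apply: intro_closed; first exact: sym_connect_sym (@hadj_sym _).
move=> a b /and3P[aV bV /existsP[e /and3P[eE ae be]]] aX.
apply/negPn/negP => bX; move: eE; rewrite !inE => /andP[/negP not_bd eG].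
apply: not_bd; rewrite eG /=; apply/andP; split; apply/set0Pn.
  by exists a; rewrite !inE ae aX.
by exists b; rewrite !inE be bX bV.
Qed.

Lemma boundary_separating G X :
  is_hypergraph G -> boundary G X != set0 -> separating G (boundary G X).
Proof.
move=> hypG /set0Pn[f]; rewrite inE => /and3P[fE /set0Pn[x xfX] /set0Pn[y yfY]].
move: xfX yfY; rewrite !inE => /andP[xf xX] /andP[yf /andP[yX yV]].
have xV : x \in hV G by have [/subsetP->] := hypG f fE.
split; first by apply/subsetP => e; rewrite inE => /andP[].
set G' := delete_edges G (boundary G X).
have comp'V z : z \in hV G -> component G' z \in components G' by move=> zV; apply: imset_f.
have comp'_neq : component G' x != component G' y.
  apply/eqP => eq; have : y \in component G' x by rewrite eq !inE yV connect0.
  by rewrite inE => /andP[_ /(closed_connect (@boundary_closed G X))]; rewrite xX (negbTE yX).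
rewrite (components_delete_edges G (boundary G X)) -/G'.
rewrite ltn_neqAle leq_imset_card andbT; apply/negP => /imset_injP inj.
move/eqP: comp'_neq; apply; apply: inj; rewrite ?comp'V //.
rewrite !bigcup_component_delete_edges //; apply/component_eq/connect1/and3P.
by split=> //; apply/existsP; exists f; rewrite fE xf yf.
Qed.

End Components.

Section Avoiding.
Variables (T : eqType) (bad : rel T).

Definition bad_for_all (S : seq T) d := all (bad^~ d) S.

Lemma avoiding_choice i S C :
  uniq C -> size C = (size S).+1 ->
  (forall j d d', j \in i :: S -> bad j d -> bad j d' -> d = d') ->
  ~~ has (bad_for_all (i :: S)) C ->
  exists2 c, c \in C & ~~ bad i c && ~~ has (bad_for_all S) (rem c C).
Proof.
move=> uC sizeC bad_fun feasible.
case: (boolP (has (bad_for_all S) C)) => [/hasP[d dC Sd]|none].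
  exists d => //; apply/andP; split.
    by apply: contra feasible => bid; apply/hasP; exists d; rewrite //= bid.
  apply/hasP => -[d' d'C Sd'].
  case: S Sd Sd' sizeC bad_fun {feasible} => [|j S] Sd Sd' sizeC bad_fun.
    have /size0nil rem_nil : size (rem d C) = 0 by rewrite size_rem // sizeC.
    by rewrite rem_nil in d'C.
  have dd' : d = d'.
    move: Sd Sd' => /andP[bjd _] /andP[bjd' _].
    by apply: (bad_fun j); rewrite ?inE ?eqxx ?orbT.
  by rewrite -dd' mem_rem_uniqF in d'C.
have [c cC bic] : exists2 c, c \in C & ~~ bad i c.
  case: S sizeC none bad_fun {feasible} => [|j S] sizeC none bad_fun.
    by case: C sizeC none uC => [|c []].
  case: C sizeC uC {none} => [|c1 [|c2 C]] // _ /andP[c1C _].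
  case: (boolP (bad i c1)) => [bic1|]; last by exists c1; rewrite ?inE ?eqxx.
  case: (boolP (bad i c2)) => [bic2|]; last by exists c2; rewrite ?inE ?eqxx ?orbT.
  by move: c1C; rewrite (bad_fun i c1 c2) ?inE ?eqxx // !inE eqxx.
exists c => //; rewrite bic /=; apply: contra none => /hasP[d /mem_rem dC Sd].
by apply/hasP; exists d.
Qed.

Lemma injection_avoiding S C :
  uniq S -> uniq C -> size S = size C ->
  (forall i d d', i \in S -> bad i d -> bad i d' -> d = d') ->
  ~~ has (bad_for_all S) C ->
  exists2 sg : T -> T, {in S, forall i, (sg i \in C) && ~~ bad i (sg i)} &
    {in S &, injective sg}.
Proof.
elim: S C => [|i S IH] C uS uC sizeSC bad_fun feasible; first by exists id.
move: uS => /= /andP[iS uS].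
have [c cC /andP[bic feasible']] := avoiding_choice uC (esym sizeSC) bad_fun feasible.
have [sg sgP sg_inj] : exists2 sg : T -> T,
    {in S, forall j, (sg j \in rem c C) && ~~ bad j (sg j)} & {in S &, injective sg}.
  apply: IH feasible'; rewrite ?rem_uniq ?size_rem // -?sizeSC //.
  by move=> j d d' jS; apply: bad_fun; rewrite inE jS orbT.
exists (fun j => if j == i then c else sg j) => [j|j1 j2].
  rewrite inE; case: eqP => [->|_ /= /sgP/andP[/mem_rem-> ->]] //.
  by rewrite cC.
rewrite !inE; case: (eqVneq j1 i) => [->|j1i]; case: (eqVneq j2 i) => [->|j2i] //= j1S j2S.
- by move=> c_sg; have /andP[] := sgP j2 j2S; rewrite -c_sg mem_rem_uniqF.
- by move=> sg_c; have /andP[] := sgP j1 j1S; rewrite sg_c mem_rem_uniqF.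
- exact: sg_inj.
Qed.

End Avoiding.

Definition swap_color (a c n : nat) := if n == a then c else if n == c then a else n.

Lemma swap_colorK a c : involutive (swap_color a c).
Proof. by move=> n; rewrite /swap_color; do ! case: eqP; lia. Qed.

Lemma swap_color_lt a c k n : a < k -> c < k -> n < k -> swap_color a c n < k.
Proof. by rewrite /swap_color; case: (n == a); case: (n == c). Qed.

Lemma swap_color_l a c : swap_color a c a = c.
Proof. by rewrite /swap_color eqxx. Qed.

Section Splitting.
Variables (T : finType) (k : nat) (G1 G2 : hypergraph T) (et : {set T}) (v : T)
  (s : {set T} -> {set T}).
Hypotheses (k_gt0 : 0 < k) (hypG1 : is_hypergraph G1) (hypG2 : is_hypergraph G2)
  (disjV : [disjoint hV G1 & hV G2]) (critG1 : critical G1 k) (critG2 : critical G2 k)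
  (etE : et \in hE G1) (low : low_vertex G2 k v) (adm : admissible et G2 v s).

Local Notation G := (split_hg G1 et G2 v s).
Local Notation B := (boundary G2 [set v]).
Local Notation splice e := ((e :\ v) :|: s e).

Lemma mem_B e : (e \in B) = (e \in hE G2) && (v \in e).
Proof. by rewrite boundary_set1 // inE. Qed.

Lemma card_B : #|B| = k.
Proof. by rewrite boundary_set1 //; case: low. Qed.

Lemma V2_notin_V1 x : x \in hV G2 -> (x \in hV G1) = false.
Proof. exact: disjointFl disjV. Qed.

Lemma B_edge e : e \in B -> e \in hE G2.
Proof. by rewrite mem_B => /andP[]. Qed.

Lemma B_sub_V2 e : e \in B -> e \subset hV G2.
Proof. by move=> /B_edge/hypG2[]. Qed.

Lemma B_other e : e \in B -> exists2 z, z \in e :\ v & z \in hV G2.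
Proof.
move=> eB; have [_ e_gt1] := hypG2 (B_edge eB).
have /set0Pn[z zev] := setD1_neq0 v e_gt1; exists z => //.
by apply: (subsetP (B_sub_V2 eB)); move: zev; rewrite inE => /andP[].
Qed.

Lemma s_sub_et e : e \in B -> s e \subset et.
Proof. by case/(adm.1 e). Qed.

Lemma s_neq0 e : e \in B -> s e != set0.
Proof. by case/(adm.1 e). Qed.

Lemma s_sub_V1 e : e \in B -> s e \subset hV G1.
Proof. by move=> /s_sub_et/subset_trans; apply; case: (hypG1 etE). Qed.

Lemma splice_setD e : e \in B -> splice e :\: hV G1 = e :\ v.
Proof.
move=> eB; apply/setP => z; rewrite !inE.
case zV1: (z \in hV G1) => /=; last by rewrite (contraFF (subsetP (s_sub_V1 eB) z)) ?orbF.
case ze: (z \in e); rewrite ?andbF //.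
by rewrite V2_notin_V1 ?(subsetP (B_sub_V2 eB)) in zV1.
Qed.

Lemma splice_inj : {in B &, injective (fun e => splice e)}.
Proof.
move=> e1 e2 e1B e2B /= same; have := splice_setD e1B; rewrite same splice_setD // => eq12.
move: e1B e2B; rewrite !mem_B => /andP[_ v1] /andP[_ v2].
by rewrite -(setD1K v1) -(setD1K v2) eq12.
Qed.

Lemma split_edgeP e' : e' \in hE G ->
  [\/ e' \in hE G1 /\ e' != et, e' \in hE G2 /\ v \notin e'
    | exists2 e, e \in B & e' = splice e].
Proof.
rewrite !in_setU in_setD1 in_setD.
case/orP=> [/orP[/andP[e'et e'E]|/andP[e'B e'E]]|/imsetP[e eB ->]].
- by apply: Or31.
- by apply: Or32; split=> //; rewrite mem_B e'E in e'B.
- by apply: Or33; exists e.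
Qed.

Lemma split_edge_G1 e : e \in hE G1 -> e != et -> e \in hE G.
Proof. by move=> eE eet; rewrite !inE eE eet. Qed.

Lemma split_edge_G2 e : e \in hE G2 -> v \notin e -> e \in hE G.
Proof. by move=> eE ve; rewrite !in_setU !in_setD mem_B eE (negbTE ve) orbT. Qed.

Lemma split_edge_splice e : e \in B -> splice e \in hE G.
Proof. by move=> eB; rewrite inE (imset_f (fun e => splice e)) ?orbT. Qed.

Lemma G2_edge_sub e : e \in hE G2 -> v \notin e -> e \subset hV G2 :\ v.
Proof.
move=> eE ve; have [/subsetP sub_eV _] := hypG2 eE; apply/subsetP => z ze.
by rewrite !inE sub_eV // andbT; apply: contraNneq ve => <-.
Qed.

Lemma split_hypergraph : is_hypergraph G.
Proof.
move=> e' /split_edgeP[[eE _]|[eE ve]|[e eB ->]].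
- by have [sub_eV e_gt1] := hypG1 eE; rewrite (subset_trans sub_eV) ?subsetUl.
- by have [_ e_gt1] := hypG2 eE; rewrite (subset_trans (G2_edge_sub eE ve)) ?subsetUr.
have /set0Pn[w ws] := s_neq0 eB; have [z zev zV2] := B_other eB; split.
  apply/subsetP => x; rewrite !inE => /orP[/andP[xv xe]|xs].
    by rewrite xv (subsetP (B_sub_V2 eB) _ xe) orbT.
  by rewrite (subsetP (s_sub_V1 eB) _ xs).
apply/card_gt1P; exists z, w; rewrite !in_setU zev ws orbT; split=> //.
by apply: contraTneq (subsetP (s_sub_V1 eB) _ ws) => <-; rewrite V2_notin_V1.
Qed.

Lemma split_boundary : boundary G (hV G1) = [set splice e | e in B].
Proof.
apply/setP => e'; rewrite inE; apply/andP/imsetP => [[]|[e eB ->]].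
  case/split_edgeP=> [[eE _]|[eE ve]|[e eB ->]] /andP[meets_V1 meets_rest]; last by exists e.
    case/set0Pn: meets_rest => x; rewrite !inE => /and3P[xe /negP[]].
    by have [/subsetP->] := hypG1 eE.
  case/set0Pn: meets_V1 => x; rewrite !inE => /andP[xe].
  by have := subsetP (G2_edge_sub eE ve) _ xe; rewrite !inE => /andP[_ /V2_notin_V1->].
split; first exact: split_edge_splice.
have /set0Pn[w ws] := s_neq0 eB; have [z zev zV2] := B_other eB.
apply/andP; split; apply/set0Pn.
  by exists w; rewrite !inE ws orbT (subsetP (s_sub_V1 eB) _ ws).
exists z; move: zev; rewrite !inE => /andP[-> ->].
by rewrite V2_notin_V1 ?zV2 ?orbT.
Qed.

Lemma card_split_boundary : #|boundary G (hV G1)| = k.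
Proof.
by rewrite split_boundary card_in_imset ?card_B //; exact: splice_inj.
Qed.

Lemma split_covered x : x \in hV G -> exists2 e', e' \in hE G & x \in e'.
Proof.
rewrite !inE => /orP[xV1|/andP[xv xV2]].
  have [e1 e1E xe1] := critical_vertex_covered critG1 k_gt0 hypG1 xV1.
  case: (eqVneq e1 et) => [e1et|e1et]; last by exists e1; rewrite ?split_edge_G1.
  have : x \in \bigcup_(e in B) s e by rewrite adm.2 -e1et.
  by case/bigcupP=> e eB xs; exists (splice e); rewrite ?split_edge_splice // inE xs orbT.
have [e2 e2E xe2] := critical_vertex_covered critG2 k_gt0 hypG2 xV2.
case: (boolP (v \in e2)) => ve; last by exists e2; rewrite ?split_edge_G2.
exists (splice e2); first by rewrite split_edge_splice // mem_B e2E.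
by rewrite !inE xv xe2.
Qed.

Lemma split_colorable_gt j : colorable G j -> k < j.
Proof.
move=> /colorableP[h [Hv He]].
have V1_sub x : x \in hV G1 -> x \in hV G by rewrite inE => ->.
case: (boolP (monochromatic h et)) => [et_mono|et_bi].
  have /set0Pn[x0 x0et] : et != set0.
    by rewrite -card_gt0; case: (hypG1 etE) => _ /ltnW.
  apply: (critical_colorable_gt critG2); apply/colorableP.
  exists (fun z => if z == v then h x0 else h z); split=> [z zV|e eE].
    case: eqP => [_|/eqP zv]; last by apply/Hv; rewrite !inE zv zV orbT.
    by apply/Hv/V1_sub; have [/subsetP->] := hypG1 etE.
  case: (boolP (v \in e)) => ve; last first.
    rewrite (monochromatic_eq_in (g := h)) ?He ?split_edge_G2 // => z ze /=.
    by case: eqP => // zv; rewrite -zv ze in ve.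
  have eB : e \in B by rewrite mem_B eE.
  rewrite -(monochromatic_splice (f := h) (S := s e) ve) ?He ?split_edge_splice ?s_neq0 //=.
    by move=> z; rewrite !inE => /andP[/negbTE->].
  move=> z /(subsetP (s_sub_et eB)) zet; rewrite eqxx.
  by move: et_mono; rewrite (monochromatic_at _ x0et) => /forall_inP/(_ z zet)/eqP.
apply: (critical_colorable_gt critG1); apply/colorableP.
exists h; split=> [z /V1_sub/Hv //|e eE].
by case: (eqVneq e et) => [-> //|eet]; apply/He/split_edge_G1.
Qed.

Lemma split_del_edge_G2 e0 f : e0 \in hE G2 ->
  (f = e0 /\ v \notin e0) \/ (e0 \in B /\ f = splice e0) -> colorable (del_edge G f) k.
Proof.
move=> e0E f_e0.
have /colorableP[g2 [Hv2 He2]] := critical_proper_colorable critG2 (del_edge_proper hypG2 e0E).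
have /colorableP[g1 col1] := critical_proper_colorable critG1 (del_edge_proper hypG1 etE).
have et_mono := critical_del_edge_monochromatic critG1 etE col1; case: col1 => Hv1 He1.
have /set0Pn[x0 x0et] : et != set0 by rewrite -card_gt0; case: (hypG1 etE) => _ /ltnW.
have x0V1 : x0 \in hV G1 by have [/subsetP->] := hypG1 etE.
pose a := g1 x0; pose c := g2 v.
have a_lt : a < k by apply: Hv1.
have c_lt : c < k by apply: Hv2; case: low.
pose h z := if z \in hV G1 then swap_color a c (g1 z) else g2 z.
have hV1 z : z \in hV G1 -> h z = swap_color a c (g1 z) by rewrite /h => ->.
have hV2 z : z \in hV G2 -> h z = g2 z by rewrite /h => /V2_notin_V1->.
apply/colorableP; exists h; split=> [z|e'].
  rewrite !inE => /orP[zV1|/andP[_ zV2]]; first by rewrite hV1 // swap_color_lt // Hv1.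
  by rewrite hV2 // Hv2.
rewrite in_setD1 => /andP[e'f /split_edgeP[[eE eet]|[eE ve]|[e eB e'_eq]]].
- have [/subsetP sub_eV _] := hypG1 eE.
  rewrite (monochromatic_eq_in (g := swap_color a c \o g1)) => [|z /sub_eV /hV1 //].
  have swap_inj : {in predT &, injective (swap_color a c)}.
    by apply: in2W; apply: inv_inj; apply: swap_colorK.
  rewrite (monochromatic_comp_in swap_inj) => [|//].
  by apply: He1; rewrite !inE eet.
- have [/subsetP sub_eV _] := hypG2 eE.
  rewrite (monochromatic_eq_in (g := g2)) => [|z /sub_eV /hV2 //].
  apply: He2; rewrite !inE eE andbT; apply: contraNneq e'f => e'e0.
  case: f_e0 => [[-> _]|[e0B _]]; first by rewrite e'e0.
  by move: e0B; rewrite mem_B -e'e0 (negbTE ve) andbF.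
- rewrite {}e'_eq in e'f *.
  have ve : v \in e by rewrite mem_B in eB; case/andP: eB.
  rewrite (monochromatic_splice (g := g2) ve (s_neq0 eB)).
  + apply: He2; rewrite !inE B_edge // andbT; apply: contraNneq e'f => ee0.
    case: f_e0 => [[_ ve0]|[_ ->]]; last by rewrite ee0.
    by rewrite -ee0 ve in ve0.
  + by move=> z; rewrite inE => /andP[_ /(subsetP (B_sub_V2 eB)) /hV2].
  move=> z /(subsetP (s_sub_et eB)) zet; rewrite hV1; last by have [/subsetP->] := hypG1 etE.
  move: et_mono; rewrite (monochromatic_at _ x0et) => /forall_inP/(_ z zet)/eqP->.
  exact: swap_color_l.
Qed.

Section LowVertexColoring.
Variable g2 : T -> nat.
Hypothesis col2 : proper_coloring (del_vertex G2 v) k g2.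
Local Notation ec := (edge_of_color G2 v g2).

Lemma edge_of_color_B c : c < k -> ec c \in B /\ {in ec c :\ v, forall z, g2 z = c}.
Proof. by rewrite boundary_set1 //; apply: edge_of_colorP. Qed.

Lemma edge_of_color_onto_B e : e \in B -> exists2 c, c < k & e = ec c.
Proof. by rewrite boundary_set1 //; apply: edge_of_color_onto. Qed.

(* [sg] permutes the colours of [G2 - v] so that every spliced edge gets two colours;
   it exists because [et], the union of the [s e], is not monochromatic under [g1]. *)
Lemma exists_recoloring g1 : ~~ monochromatic g1 et ->
  exists2 sg : nat -> nat,
    {in gtn k, forall c, sg c < k /\ ~~ [forall x in s (ec c), g1 x == sg c]} &
    {in gtn k &, injective sg}.
Proof.
move=> et_bi; pose bad c d := [forall x in s (ec c), g1 x == d].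
have mem_iota_k c : (c \in iota 0 k) = (c < k) by rewrite mem_iota leq0n add0n.
have [sg sgP sg_inj] : exists2 sg : nat -> nat,
    {in iota 0 k, forall c, (sg c \in iota 0 k) && ~~ bad c (sg c)} &
    {in iota 0 k &, injective sg}.
  apply: injection_avoiding; rewrite ?iota_uniq //.
    move=> c d d'; rewrite mem_iota_k => /edge_of_color_B[/s_neq0/set0Pn[w ws] _].
    by move=> /forall_inP/(_ w ws)/eqP<- /forall_inP/(_ w ws)/eqP.
  apply: contra et_bi => /hasP[d _ /allP all_bad].
  have et_d x : x \in et -> g1 x = d.
    case: adm => _ <- /bigcupP[e eB xs]; have [c c_lt ec_c] := edge_of_color_onto_B eB.
    have := all_bad c; rewrite mem_iota_k c_lt => /(_ isT)/forall_inP/(_ x).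
    by rewrite -ec_c => /(_ xs)/eqP.
  by apply/forall_inP => x /et_d->; apply/forall_inP => y /et_d->.
exists sg => [c c_lt|c c' c_lt c'_lt]; last by apply: sg_inj; rewrite mem_iota_k.
by have := sgP c; rewrite !mem_iota_k => /(_ c_lt)/andP[].
Qed.

End LowVertexColoring.

Lemma split_del_edge_G1 f : f \in hE G1 -> f != et -> colorable (del_edge G f) k.
Proof.
move=> fE fet.
have /colorableP[g1 [Hv1 He1]] := critical_proper_colorable critG1 (del_edge_proper hypG1 fE).
have et_bi : ~~ monochromatic g1 et by apply: He1; rewrite !inE eq_sym fet.
have vV2 : v \in hV G2 by case: low.
have /colorableP[g2 col2] := critical_proper_colorable critG2 (del_vertex_proper hypG2 vV2).
have [sg sgP sg_inj] := exists_recoloring col2 et_bi.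
have g2_lt z : z \in hV G2 -> z != v -> g2 z < k.
  by move=> zV zv; case: col2 => Hv2 _; apply: Hv2; rewrite !inE zv.
pose h z := if z \in hV G1 then g1 z else sg (g2 z).
have hV1 z : z \in hV G1 -> h z = g1 z by rewrite /h => ->.
have hV2 z : z \in hV G2 -> h z = sg (g2 z) by rewrite /h => /V2_notin_V1->.
apply/colorableP; exists h; split=> [z|e'].
  rewrite !inE => /orP[zV1|/andP[zv zV2]]; first by rewrite hV1 // Hv1.
  by rewrite hV2 //; case: (sgP (g2 z)) => //; apply: g2_lt.
rewrite in_setD1 => /andP[e'f /split_edgeP[[eE eet]|[eE ve]|[e eB e'_eq]]].
- have [/subsetP sub_eV _] := hypG1 eE.
  rewrite (monochromatic_eq_in (g := g1)) => [|z /sub_eV /hV1 //].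
  by apply: He1; rewrite !inE e'f.
- have /subsetP sub_eV := G2_edge_sub eE ve.
  have sub_V2 z : z \in e' -> z != v /\ z \in hV G2 by move=> /sub_eV; rewrite !inE => /andP[].
  rewrite (monochromatic_eq_in (g := sg \o g2)) => [|z /sub_V2[_ /hV2 //]].
  rewrite (monochromatic_comp_in sg_inj) => [|z /sub_V2[zv zV]]; last exact: g2_lt.
  by case: col2 => _; apply; rewrite !inE eE andbT ve.
rewrite {}e'_eq {e'f}.
have [c c_lt ec_c] := edge_of_color_onto_B col2 eB.
have [_ ec_col] := edge_of_color_B col2 c_lt.
have [z zev zV2] := B_other eB.
have [_ /forall_inPn[x xs /= g1x]] := sgP c c_lt.
rewrite -ec_c in xs ec_col.
apply/monochromaticPn; exists z, x; rewrite !in_setU zev xs orbT; split=> //.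
by rewrite hV2 // ec_col // hV1 ?(subsetP (s_sub_V1 eB)) // eq_sym.
Qed.

Lemma split_del_edge f : f \in hE G -> colorable (del_edge G f) k.
Proof.
case/split_edgeP=> [[fE fet]|[fE vf]|[e eB ->]].
- exact: split_del_edge_G1.
- by apply: (split_del_edge_G2 (e0 := f)) => //; left.
- by apply: (split_del_edge_G2 (e0 := e)); [exact: B_edge|right].
Qed.

Lemma split_critical : critical G k.
Proof.
apply: (critical_from_del_edge split_hypergraph _ split_covered split_colorable_gt
  split_del_edge).
have /card_gt0P[e eB] : 0 < #|B| by rewrite card_B.
by apply/set0Pn; exists (splice e); apply: split_edge_splice.
Qed.

End Splitting.

Theorem theorem15 (T : finType) (k : nat) (G1 G2 : hypergraph T)
    (et : {set T}) (v : T) (s : {set T} -> {set T}) :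
  2 <= k ->
  is_hypergraph G1 -> is_hypergraph G2 ->
  [disjoint hV G1 & hV G2] ->
  critical G1 k -> critical G2 k ->
  et \in hE G1 ->
  low_vertex G2 k v ->
  admissible et G2 v s ->
  critical (split_hg G1 et G2 v s) k /\
  separating (split_hg G1 et G2 v s) (boundary (split_hg G1 et G2 v s) (hV G1)) /\
  #|boundary (split_hg G1 et G2 v s) (hV G1)| = k.
Proof.
move=> k_ge2 hypG1 hypG2 disjV critG1 critG2 etE low adm.
have k_gt0 : 0 < k by apply: leq_trans k_ge2.
have card_bd := card_split_boundary hypG1 hypG2 disjV etE low adm.
split; first exact: split_critical.
split=> //; apply: boundary_separating; first exact: split_hypergraph.
by rewrite -card_gt0 card_bd.
Qed.
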